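(* Let $S(A)=(a_n)$ be an independent Stanley sequence. Then there exists a constant $\alpha$ such that $a_{2^k}=\alpha\cdot 3^k$ for all sufficiently large $k$.
   Context: A set of non-negative integers is 3-free if no three of its elements form an arithmetic progression. For a finite 3-free set $A=\{a_0<\cdots<a_k\}$ of non-negative integers, the Stanley sequence $S(A)=(a_n)_{n\ge0}$ is the increasing sequence with initial terms $a_0,\ldots,a_k$ in which each subsequent $a_{n+1}$ is the smallest integer greater than $a_n$ such that $\{a_0,\ldots,a_{n+1}\}$ is 3-free. A Stanley sequence $(a_n)$ is independent if there is a constant $\lambda$ such that for all sufficiently large $k$: $a_{2^k+i}=a_{2^k}+a_i$ for all $0\le i<2^k$, and $a_{2^k}=2a_{2^k-1}-\lambda+1$. *)

From mathcomp Require Import all_boot all_order all_algebra.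
Set Implicit Arguments. Unset Strict Implicit. Unset Printing Implicit Defensive.
Import GRing.Theory Num.Theory.

Definition three_free (P : nat -> Prop) : Prop :=
  forall x y z : nat, P x -> P y -> P z -> x < y -> y < z -> x + z <> 2 * y.

Definition prefix_set (a : nat -> nat) (n : nat) : nat -> Prop :=
  fun x => exists2 i, i <= n & a i = x.

(* [stanley A a]: A is a nonempty, strictly increasing, 3-free finite list
   a_0 < ... < a_k of naturals, and a = S(A) is its Stanley sequence:
   a_i is the i-th element of A for i <= k, and for n >= k, a_{n+1} is the
   smallest integer > a_n such that {a_0,...,a_{n+1}} is 3-free. *)
Definition stanley (A : seq nat) (a : nat -> nat) : Prop :=
  [/\ 0 < size A, sorted ltn A, three_free (fun x => x \in A),
      (forall i, i < size A -> a i = nth 0 A i) &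
      (forall n, (size A).-1 <= n ->
         [/\ a n < a n.+1,
             three_free (prefix_set a n.+1) &
             forall m, a n < m -> m < a n.+1 ->
               ~ three_free (fun x => prefix_set a n x \/ x = m)])].

Definition independent (a : nat -> nat) : Prop :=
  exists lambda : int, exists K : nat, forall k : nat, K <= k ->
    (forall i, i < 2 ^ k -> a (2 ^ k + i) = a (2 ^ k) + a i) /\
    ((a (2 ^ k)%N)%:Z = 2 * (a (2 ^ k)%N.-1)%:Z - lambda + 1)%R.

From mathcomp Require Import all_boot all_order all_algebra.
From mathcomp Require Import zify ring.
Import GRing.Theory Num.Theory.

(* With [n = 2^k], the doubling relation at level k+1 gives
   a(2n) = 2 a(2n-1) - lambda + 1, and the splitting relation at level k
   gives a(2n-1) = a(n) + a(n-1).  Substituting and using the doubling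
   relation at level k once more yields a(2n) = 3 a(n), so a(2^k) is
   eventually geometric with ratio 3. *)

Lemma pow2_succ_pred (k : nat) : (2 ^ k.+1).-1 = 2 ^ k + (2 ^ k).-1.
Proof. have : 0 < 2 ^ k by rewrite expn_gt0. by rewrite expnS; lia. Qed.

Lemma pow2_succ_triple (a : nat -> nat) (lambda : int) (k : nat) :
  (forall i, i < 2 ^ k -> a (2 ^ k + i) = a (2 ^ k) + a i) ->
  ((a (2 ^ k)%N)%:Z = 2 * (a (2 ^ k)%N.-1)%:Z - lambda + 1)%R ->
  ((a (2 ^ k.+1)%N)%:Z = 2 * (a (2 ^ k.+1)%N.-1)%:Z - lambda + 1)%R ->
  a (2 ^ k.+1) = 3 * a (2 ^ k).
Proof.
have n_gt0 : 0 < 2 ^ k by rewrite expn_gt0.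
move=> split double double_succ.
have split_pred : a (2 ^ k + (2 ^ k).-1) = a (2 ^ k) + a (2 ^ k).-1.
  by apply: split; rewrite prednK.
rewrite pow2_succ_pred split_pred in double_succ.
lia.
Qed.

Lemma eventually_geometric (f : nat -> nat) (c K : nat) :
  (forall k, K <= k -> f k.+1 = c * f k) ->
  forall j, f (K + j) = c ^ j * f K.
Proof.
move=> f_succ; elim=> [|j IHj]; first by rewrite addn0 mul1n.
by rewrite addnS f_succ ?leq_addr // IHj expnS mulnA.
Qed.

Lemma eventually_geometric_field (F : fieldType) (f : nat -> nat) (c K : nat) :
  (c%:R != 0 :> F)%R ->
  (forall k, K <= k -> f k.+1 = c * f k) ->
  forall k, K <= k -> ((f k)%:R = (f K)%:R / c%:R ^+ K * c%:R ^+ k :> F)%R.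
Proof.
move=> c_neq0 f_succ k le_Kk.
rewrite -(subnKC le_Kk) (eventually_geometric _ _ _ f_succ) natrM natrX exprD.
by field; rewrite expf_neq0.
Qed.

Theorem mainTheorem6 (A : seq nat) (a : nat -> nat) :
  stanley A a -> independent a ->
  exists alpha : rat, exists K : nat, forall k : nat, K <= k ->
    ((a (2 ^ k)%N)%:R = alpha * 3%:R ^+ k)%R.
Proof.
move=> _ [lambda [K indep]].
have triple k : K <= k -> a (2 ^ k.+1) = 3 * a (2 ^ k).
  move=> le_Kk; have [split double] := indep k le_Kk.
  have [_ double_succ] := indep k.+1 (leqW le_Kk).
  exact: pow2_succ_triple split double double_succ.
exists ((a (2 ^ K)%N)%:R / 3%:R ^+ K)%R, K.
exact: (eventually_geometric_field _ (fun k => a (2 ^ k)) _ _ _ triple).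
Qed.
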